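(* Let $\mathbb{H}=\{z\in\mathbb{C}:\operatorname{Im}z>0\}$. For $z_1,z_2\in\mathbb{H}$ and $p\ge1$ let \[ T_p(z_1,z_2)=\frac{|z_1-z_2|}{|z_1-\overline{z_2}|\sqrt[p]{\alpha^p+(1-\alpha)^p}},\qquad \alpha=\frac{\operatorname{Im}(z_1)}{\operatorname{Im}(z_1)+\operatorname{Im}(z_2)}. \] Then \[ b_{\mathbb{H},p}(z_1,z_2)\ge T_p(z_1,z_2)\ge\frac{|z_1-z_2|}{|z_1-\overline{z_2}|}=s_{\mathbb{H}}(z_1,z_2). \] In particular $b_{\mathbb{H},1}(z_1,z_2)=T_1(z_1,z_2)=s_{\mathbb{H}}(z_1,z_2)$. For $p>1$, the equality $b_{\mathbb{H},p}(z_1,z_2)=T_p(z_1,z_2)$ holds if and only if $\operatorname{Re}(z_1)=\operatorname{Re}(z_2)$ or $\operatorname{Im}(z_1)=\operatorname{Im}(z_2)$.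
   Context: For $z_1,z_2\in\mathbb{H}$ and $p\ge1$, $b_{\mathbb{H},p}(z_1,z_2)=\sup_{t\in\mathbb{R}}\frac{|z_1-z_2|}{\sqrt[p]{|z_1-t|^p+|t-z_2|^p}}$, and $s_{\mathbb{H}}=b_{\mathbb{H},1}$. *)

From Stdlib Require Import Reals.
From Coquelicot Require Import Coquelicot.
Open Scope R_scope.

Definition inH (z : C) : Prop := 0 < Im z.

Definition bH_ratio (p : R) (z1 z2 : C) (t : R) : R :=
  Cmod (Cminus z1 z2) /
  Rpower (Rpower (Cmod (Cminus z1 (RtoC t))) p
          + Rpower (Cmod (Cminus (RtoC t) z2)) p) (1 / p).

Definition b_H (p : R) (z1 z2 : C) : Rbar :=
  Lub_Rbar (fun r => exists t : R, r = bH_ratio p z1 z2 t).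

Definition s_H (z1 z2 : C) : Rbar := b_H 1 z1 z2.

Definition alphaH (z1 z2 : C) : R := Im z1 / (Im z1 + Im z2).

Definition T_p (p : R) (z1 z2 : C) : R :=
  Cmod (Cminus z1 z2) /
  (Cmod (Cminus z1 (Cconj z2)) *
   Rpower (Rpower (alphaH z1 z2) p + Rpower (1 - alphaH z1 z2) p) (1 / p)).

From Stdlib Require Import Reals Lra Psatz.
From Coquelicot Require Import Coquelicot.
Open Scope R_scope.

(** Reflect [z2] to [conj z2]: for real [t], [|t - z2| = |t - conj z2|], and the
    segment from [z1] to [conj z2] crosses the real axis at
    [t0 = Re z1 + alpha (Re z2 - Re z1)], cutting [W = |z1 - conj z2|] into
    [alpha W] and [(1 - alpha) W].  At [t0] the ratio defining [b_{H,p}] equals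
    [T_p], and [alpha^p + (1 - alpha)^p <= 1] gives [T_p >= s_H].  For [p = 1]
    the triangle inequality [|z1 - t| + |t - conj z2| >= W] shows that [t0]
    attains the supremum.  For [p > 1], [b_{H,p} = T_p] means that [t0] minimises
    [|z1 - t|^p + |t - z2|^p].  If [Re z1 = Re z2], [t0] minimises both terms;
    if [Im z1 = Im z2], then [alpha = 1/2] and convexity of [x^p] together with
    the triangle inequality give the minimum.  Otherwise the derivative at [t0],
    [p (Re z2 - Re z1) W^(p-2) (alpha^(p-1) - (1 - alpha)^(p-1))], is nonzero. *)

Lemma Rpower_pos x y : 0 < Rpower x y.
Proof. exact (exp_pos _). Qed.

Lemma Rpower_1_base y : Rpower 1 y = 1.
Proof. unfold Rpower. rewrite ln_1, Rmult_0_r. exact exp_0. Qed.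

Lemma Rpower_plus_1 x y : 0 < x -> Rpower x (y + 1) = x * Rpower x y.
Proof. intros Hx. rewrite Rpower_plus, Rpower_1 by exact Hx. ring. Qed.

Lemma Rpower_inj_l a b q : 0 < q -> 0 < a -> 0 < b -> Rpower a q = Rpower b q -> a = b.
Proof.
  intros Hq Ha Hb E. destruct (Rtotal_order a b) as [Hab | [Hab | Hab]]; [| exact Hab |].
  - pose proof (Rlt_Rpower_l a b q Hq (conj Ha Hab)). lra.
  - pose proof (Rlt_Rpower_l b a q Hq (conj Hb Hab)). lra.
Qed.

Lemma Rpower_le_self u p : 0 < u <= 1 -> 1 <= p -> Rpower u p <= u.
Proof.
  intros Hu Hp. replace p with (p - 1 + 1) by ring. rewrite Rpower_plus_1 by lra.
  assert (Rpower u (p - 1) <= 1).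
  { rewrite <- (Rpower_1_base (p - 1)) at 2. apply Rle_Rpower_l; lra. }
  nra.
Qed.

Lemma Rpower_ge_bernoulli u p : 0 < u -> 1 <= p -> 1 + p * (u - 1) <= Rpower u p.
Proof.
  intros Hu Hp.
  assert (Hinv : u * (1 - ln u) <= 1).
  { pose proof (exp_ineq1_le (- ln u)) as H.
    rewrite exp_Ropp, exp_ln in H by exact Hu.
    apply Rmult_le_compat_l with (r := u) in H; [| lra].
    rewrite Rinv_r in H by lra. lra. }
  assert (Hexp : 1 + (p - 1) * ln u <= Rpower u (p - 1)) by apply exp_ineq1_le.
  replace p with (p - 1 + 1) at 2 by ring. rewrite Rpower_plus_1 by exact Hu.
  nra.
Qed.

Lemma Rpower_midpoint_le x y p : 0 < x -> 0 < y -> 1 <= p ->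
  2 * Rpower ((x + y) / 2) p <= Rpower x p + Rpower y p.
Proof.
  intros Hx Hy Hp. set (m := (x + y) / 2). assert (Hm : 0 < m) by (unfold m; lra).
  assert (Hscale : forall u, 0 < u -> Rpower u p = Rpower m p * Rpower (u / m) p).
  { intros u Hu. rewrite Rpower_mult_distr by (try apply Rdiv_lt_0_compat; lra).
    f_equal. field. lra. }
  rewrite (Hscale x Hx), (Hscale y Hy), <- Rmult_plus_distr_l.
  pose proof (Rpower_ge_bernoulli (x / m) p ltac:(apply Rdiv_lt_0_compat; lra) Hp).
  pose proof (Rpower_ge_bernoulli (y / m) p ltac:(apply Rdiv_lt_0_compat; lra) Hp).
  assert (x / m + y / m = 2) by (unfold m; field; lra).
  rewrite Rmult_comm. apply Rmult_le_compat_l; [left; apply Rpower_pos | nra].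
Qed.

Lemma Lub_Rbar_range_ub (f : R -> R) t :
  Rbar_le (f t) (Lub_Rbar (fun r => exists t, r = f t)).
Proof.
  destruct (Lub_Rbar_correct (fun r => exists t, r = f t)) as [Hub _].
  apply Hub. now exists t.
Qed.

Lemma Lub_Rbar_range_max (f : R -> R) t0 : (forall t, f t <= f t0) ->
  Lub_Rbar (fun r => exists t, r = f t) = Finite (f t0).
Proof.
  intros Hmax. apply is_lub_Rbar_unique. split.
  - intros r [t ->]. apply Hmax.
  - intros b Hb. apply Hb. now exists t0.
Qed.

Lemma is_derive_global_min_eq0 (f : R -> R) c l :
  is_derive f c l -> (forall t, f c <= f t) -> l = 0.
Proof.
  intros Hd Hmin. apply is_derive_Reals in Hd.
  exact (deriv_minimum f (c - 1) (c + 1) c (exist _ l Hd)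
           ltac:(lra) ltac:(lra) (fun t _ _ => Hmin t)).
Qed.

Lemma Cmod_sub_RtoC z t : Cmod (Cminus z (RtoC t)) = sqrt ((Re z - t) ^ 2 + Im z ^ 2).
Proof. destruct z. unfold Cmod, Cminus, Cplus, Copp, RtoC; simpl. f_equal; ring. Qed.

Lemma Cmod_sub_conj z1 z2 :
  Cmod (Cminus z1 (Cconj z2)) = sqrt ((Re z1 - Re z2) ^ 2 + (Im z1 + Im z2) ^ 2).
Proof. destruct z1, z2. unfold Cmod, Cminus, Cplus, Copp, Cconj; simpl. f_equal; ring. Qed.

Lemma Cmod_RtoC_sub z t : Cmod (Cminus (RtoC t) z) = Cmod (Cminus z (RtoC t)).
Proof. rewrite <- Cmod_opp. f_equal. ring. Qed.

Lemma Cmod_sub_RtoC_pos z t : 0 < Im z -> 0 < Cmod (Cminus z (RtoC t)).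
Proof.
  intros Hz. rewrite Cmod_sub_RtoC. apply sqrt_lt_R0.
  pose proof (pow2_ge_0 (Re z - t)). pose proof (pow_lt _ 2 Hz). lra.
Qed.

Lemma Cmod_RtoC_sub_pos z t : 0 < Im z -> 0 < Cmod (Cminus (RtoC t) z).
Proof. rewrite Cmod_RtoC_sub. apply Cmod_sub_RtoC_pos. Qed.

Lemma Cmod_sub_RtoC_Re_le z t : Cmod (Cminus z (RtoC (Re z))) <= Cmod (Cminus z (RtoC t)).
Proof.
  rewrite !Cmod_sub_RtoC. apply sqrt_le_1_alt.
  pose proof (pow2_ge_0 (Re z - t)). replace (Re z - Re z) with 0 by ring. simpl. lra.
Qed.

Lemma Cmod_sub_conj_le z1 z2 t :
  Cmod (Cminus z1 (Cconj z2)) <= Cmod (Cminus z1 (RtoC t)) + Cmod (Cminus (RtoC t) z2).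
Proof.
  rewrite <- (Cmod_conj (Cminus (RtoC t) z2)).
  replace (Cminus z1 (Cconj z2)) with (Cplus (Cminus z1 (RtoC t)) (Cconj (Cminus (RtoC t) z2))).
  - apply Cmod_triangle.
  - destruct z1, z2. unfold Cminus, Cplus, Copp, Cconj, RtoC; simpl. f_equal; ring.
Qed.

Lemma is_derive_Rpower_Cmod_sub z p t : 0 < Im z ->
  is_derive (fun t => Rpower (Cmod (Cminus z (RtoC t))) p) t
    (p * (t - Re z) * Rpower (Cmod (Cminus z (RtoC t))) (p - 2)).
Proof.
  intros Hz. set (d := Cmod (Cminus z (RtoC t))).
  assert (Hd : 0 < d) by now apply Cmod_sub_RtoC_pos.
  assert (Hdist : is_derive (fun t => Cmod (Cminus z (RtoC t))) t ((t - Re z) / d)).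
  { apply is_derive_ext with (fun t => sqrt ((Re z - t) ^ 2 + Im z ^ 2)).
    { intros s. symmetry. apply Cmod_sub_RtoC. }
    unfold d in *. rewrite Cmod_sub_RtoC in *. auto_derive.
    - pose proof (pow2_ge_0 (Re z - t)). pose proof (pow_lt _ 2 Hz). simpl in *. lra.
    - replace ((Re z + - t) * ((Re z + - t) * 1) + Im z * (Im z * 1))
        with ((Re z - t) ^ 2 + Im z ^ 2) by ring.
      field. lra. }
  replace (p * (t - Re z) * Rpower d (p - 2))
    with (scal ((t - Re z) / d) (p * Rpower d (p - 1))).
  - apply (is_derive_comp (fun x => Rpower x p)); [| exact Hdist].
    apply is_derive_Reals, derivable_pt_lim_power, Hd.
  - replace (p - 1) with (p - 2 + 1) by ring. rewrite Rpower_plus_1 by exact Hd.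
    unfold scal; simpl. unfold mult; simpl. field. lra.
Qed.

Definition bH_sum (p : R) (z1 z2 : C) (t : R) : R :=
  Rpower (Cmod (Cminus z1 (RtoC t))) p + Rpower (Cmod (Cminus (RtoC t) z2)) p.

Lemma bH_ratio_bH_sum p z1 z2 t :
  bH_ratio p z1 z2 t = Cmod (Cminus z1 z2) / Rpower (bH_sum p z1 z2 t) (1 / p).
Proof. reflexivity. Qed.

Lemma bH_sum_pos p z1 z2 t : 0 < bH_sum p z1 z2 t.
Proof.
  unfold bH_sum. pose proof (Rpower_pos (Cmod (Cminus z1 (RtoC t))) p).
  pose proof (Rpower_pos (Cmod (Cminus (RtoC t) z2)) p). lra.
Qed.

Lemma bH_ratio_antitone p z1 z2 s t : 0 < p ->
  bH_sum p z1 z2 t <= bH_sum p z1 z2 s -> bH_ratio p z1 z2 s <= bH_ratio p z1 z2 t.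
Proof.
  intros Hp Hst. rewrite !bH_ratio_bH_sum. apply Rmult_le_compat_l; [apply Cmod_ge_0 |].
  apply Rinv_le_contravar; [apply Rpower_pos |].
  apply Rle_Rpower_l; [left; apply Rdiv_lt_0_compat; lra | split; [apply bH_sum_pos | exact Hst]].
Qed.

Lemma bH_ratio_strict_antitone p z1 z2 s t : 0 < p -> 0 < Cmod (Cminus z1 z2) ->
  bH_sum p z1 z2 t < bH_sum p z1 z2 s -> bH_ratio p z1 z2 s < bH_ratio p z1 z2 t.
Proof.
  intros Hp Hd Hst. rewrite !bH_ratio_bH_sum. apply Rmult_lt_compat_l; [exact Hd |].
  apply Rinv_lt_contravar; [apply Rmult_lt_0_compat; apply Rpower_pos |].
  apply Rlt_Rpower_l; [apply Rdiv_lt_0_compat; lra | split; [apply bH_sum_pos | exact Hst]].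
Qed.

Lemma bH_ratio_le_b_H p z1 z2 t : Rbar_le (bH_ratio p z1 z2 t) (b_H p z1 z2).
Proof. apply Lub_Rbar_range_ub. Qed.

Lemma b_H_eq_of_bH_sum_min p z1 z2 t0 : 0 < p ->
  (forall t, bH_sum p z1 z2 t0 <= bH_sum p z1 z2 t) ->
  b_H p z1 z2 = Finite (bH_ratio p z1 z2 t0).
Proof.
  intros Hp Hmin. apply Lub_Rbar_range_max. intros t. now apply bH_ratio_antitone.
Qed.

Lemma bH_sum_min_of_b_H_eq p z1 z2 t0 : 0 < p -> 0 < Cmod (Cminus z1 z2) ->
  b_H p z1 z2 = Finite (bH_ratio p z1 z2 t0) ->
  forall t, bH_sum p z1 z2 t0 <= bH_sum p z1 z2 t.
Proof.
  intros Hp Hd Hb t. apply Rnot_lt_le. intros Hlt.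
  pose proof (bH_ratio_strict_antitone p z1 z2 t0 t Hp Hd Hlt).
  pose proof (bH_ratio_le_b_H p z1 z2 t) as Hub. rewrite Hb in Hub. simpl in Hub. lra.
Qed.

Lemma is_derive_bH_sum p z1 z2 t : inH z1 -> inH z2 ->
  is_derive (bH_sum p z1 z2) t
    (p * (t - Re z1) * Rpower (Cmod (Cminus z1 (RtoC t))) (p - 2)
     + p * (t - Re z2) * Rpower (Cmod (Cminus z2 (RtoC t))) (p - 2)).
Proof.
  intros Hz1 Hz2.
  apply is_derive_ext with
    (fun t => Rpower (Cmod (Cminus z1 (RtoC t))) p + Rpower (Cmod (Cminus z2 (RtoC t))) p).
  { intros s. unfold bH_sum. now rewrite Cmod_RtoC_sub. }
  apply (is_derive_plus (fun t => Rpower (Cmod (Cminus z1 (RtoC t))) p)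
                        (fun t => Rpower (Cmod (Cminus z2 (RtoC t))) p));
    now apply is_derive_Rpower_Cmod_sub.
Qed.

Definition real_crossing (z1 z2 : C) : R := Re z1 + alphaH z1 z2 * (Re z2 - Re z1).

Section RealCrossing.

Variables z1 z2 : C.
Hypotheses (Hz1 : inH z1) (Hz2 : inH z2).

Local Notation a := (alphaH z1 z2).
Local Notation t0 := (real_crossing z1 z2).
Local Notation W := (Cmod (Cminus z1 (Cconj z2))).
Local Notation D := (Cmod (Cminus z1 z2)).

Lemma alphaH_bounds : 0 < a < 1.
Proof.
  unfold inH, alphaH in *. split.
  - apply Rdiv_lt_0_compat; lra.
  - apply Rmult_lt_reg_r with (Im z1 + Im z2); [lra |].
    unfold Rdiv. rewrite Rmult_assoc, Rinv_l; lra.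
Qed.

Lemma alphaH_eq_compl_iff : a = 1 - a <-> Im z1 = Im z2.
Proof.
  unfold inH, alphaH in *. split; intros E.
  - apply Rmult_eq_reg_r with (/ (Im z1 + Im z2)).
    + replace (1 - Im z1 / (Im z1 + Im z2)) with (Im z2 / (Im z1 + Im z2)) in E
        by (field; lra).
      exact E.
    + apply Rinv_neq_0_compat. lra.
  - rewrite E. field. lra.
Qed.

Lemma Cmod_sub_conj_pos : 0 < W.
Proof.
  unfold inH in *. rewrite Cmod_sub_conj. apply sqrt_lt_R0.
  pose proof (pow2_ge_0 (Re z1 - Re z2)). pose proof (pow_lt (Im z1 + Im z2) 2). lra.
Qed.

Lemma Cmod_sub_real_crossing_l : Cmod (Cminus z1 (RtoC t0)) = a * W.
Proof.
  pose proof alphaH_bounds. unfold inH in *.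
  rewrite Cmod_sub_RtoC, Cmod_sub_conj, <- (sqrt_pow2 a) by lra.
  rewrite <- sqrt_mult by (apply pow2_ge_0 || (apply Rplus_le_le_0_compat; apply pow2_ge_0)).
  f_equal. unfold real_crossing, alphaH. field. lra.
Qed.

Lemma Cmod_sub_real_crossing_r : Cmod (Cminus (RtoC t0) z2) = (1 - a) * W.
Proof.
  pose proof alphaH_bounds. unfold inH in *.
  rewrite Cmod_RtoC_sub, Cmod_sub_RtoC, Cmod_sub_conj, <- (sqrt_pow2 (1 - a)) by lra.
  rewrite <- sqrt_mult by (apply pow2_ge_0 || (apply Rplus_le_le_0_compat; apply pow2_ge_0)).
  f_equal. unfold real_crossing, alphaH. field. lra.
Qed.

Lemma T_p_eq_bH_ratio_real_crossing p : 0 < p -> T_p p z1 z2 = bH_ratio p z1 z2 t0.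
Proof.
  intros Hp. pose proof alphaH_bounds. pose proof Cmod_sub_conj_pos.
  unfold T_p, bH_ratio. rewrite Cmod_sub_real_crossing_l, Cmod_sub_real_crossing_r.
  rewrite <- (Rpower_mult_distr a W), <- (Rpower_mult_distr (1 - a) W) by lra.
  replace (Rpower a p * Rpower W p + Rpower (1 - a) p * Rpower W p)
    with ((Rpower a p + Rpower (1 - a) p) * Rpower W p) by ring.
  rewrite <- Rpower_mult_distr, Rpower_mult.
  - replace (p * (1 / p)) with 1 by (field; lra). rewrite Rpower_1 by lra. f_equal. ring.
  - pose proof (Rpower_pos a p). pose proof (Rpower_pos (1 - a) p). lra.
  - apply Rpower_pos.
Qed.

Lemma T_p_1 : T_p 1 z1 z2 = D / W.
Proof.
  pose proof alphaH_bounds. unfold T_p.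
  replace (1 / 1) with 1 by field. rewrite (Rpower_1 a), (Rpower_1 (1 - a)) by lra.
  replace (a + (1 - a)) with 1 by ring. rewrite Rpower_1, Rmult_1_r by lra. reflexivity.
Qed.

Lemma T_p_ge p : 1 <= p -> D / W <= T_p p z1 z2.
Proof.
  intros Hp. pose proof alphaH_bounds. pose proof Cmod_sub_conj_pos. unfold T_p.
  set (A := Rpower a p + Rpower (1 - a) p).
  assert (HA : 0 < A <= 1).
  { unfold A. pose proof (Rpower_pos a p). pose proof (Rpower_pos (1 - a) p).
    pose proof (Rpower_le_self a p ltac:(lra) Hp).
    pose proof (Rpower_le_self (1 - a) p ltac:(lra) Hp). lra. }
  assert (Hroot : Rpower A (1 / p) <= 1).
  { rewrite <- (Rpower_1_base (1 / p)) at 2. apply Rle_Rpower_l; [| exact HA].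
    left. apply Rdiv_lt_0_compat; lra. }
  pose proof (Rpower_pos A (1 / p)).
  unfold Rdiv. apply Rmult_le_compat_l; [apply Cmod_ge_0 |].
  apply Rinv_le_contravar; nra.
Qed.

Lemma bH_sum_1_min_at_real_crossing t : bH_sum 1 z1 z2 t0 <= bH_sum 1 z1 z2 t.
Proof.
  pose proof alphaH_bounds. pose proof Cmod_sub_conj_pos.
  pose proof (Cmod_sub_RtoC_pos z1 t Hz1). pose proof (Cmod_RtoC_sub_pos z2 t Hz2).
  unfold bH_sum. rewrite Cmod_sub_real_crossing_l, Cmod_sub_real_crossing_r.
  rewrite !Rpower_1 by nra. pose proof (Cmod_sub_conj_le z1 z2 t). lra.
Qed.

Lemma bH_sum_min_at_real_crossing_of_Re_eq p t : 0 < p -> Re z1 = Re z2 ->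
  bH_sum p z1 z2 t0 <= bH_sum p z1 z2 t.
Proof.
  intros Hp Hre. unfold bH_sum. rewrite !Cmod_RtoC_sub.
  assert (Ht0 : t0 = Re z1) by (unfold real_crossing; rewrite Hre; ring).
  apply Rplus_le_compat; apply Rle_Rpower_l; try lra; split;
    try (now apply Cmod_sub_RtoC_pos); rewrite Ht0; [| rewrite Hre];
    apply Cmod_sub_RtoC_Re_le.
Qed.

Lemma bH_sum_min_at_real_crossing_of_Im_eq p t : 1 <= p -> Im z1 = Im z2 ->
  bH_sum p z1 z2 t0 <= bH_sum p z1 z2 t.
Proof.
  intros Hp Him. apply alphaH_eq_compl_iff in Him.
  pose proof alphaH_bounds. pose proof Cmod_sub_conj_pos.
  pose proof (Cmod_sub_conj_le z1 z2 t).
  unfold bH_sum. rewrite Cmod_sub_real_crossing_l, Cmod_sub_real_crossing_r, <- Him.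
  set (u := Cmod (Cminus z1 (RtoC t))) in *. set (v := Cmod (Cminus (RtoC t) z2)) in *.
  assert (Hu : 0 < u) by now apply Cmod_sub_RtoC_pos.
  assert (Hv : 0 < v) by now apply Cmod_RtoC_sub_pos.
  assert (Hhalf : Rpower (a * W) p <= Rpower ((u + v) / 2) p).
  { apply Rle_Rpower_l; [lra |]. replace a with (/ 2) by lra. lra. }
  pose proof (Rpower_midpoint_le u v p Hu Hv Hp). lra.
Qed.

Lemma bH_sum_not_min_at_real_crossing p : 1 < p -> Re z1 <> Re z2 -> Im z1 <> Im z2 ->
  ~ (forall t, bH_sum p z1 z2 t0 <= bH_sum p z1 z2 t).
Proof.
  intros Hp Hre Him Hmin. apply Him, alphaH_eq_compl_iff.
  pose proof alphaH_bounds. pose proof Cmod_sub_conj_pos.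
  pose proof (is_derive_global_min_eq0 _ _ _ (is_derive_bH_sum p z1 z2 t0 Hz1 Hz2) Hmin)
    as Hder.
  rewrite <- (Cmod_RtoC_sub z2), Cmod_sub_real_crossing_l, Cmod_sub_real_crossing_r,
    <- !Rpower_mult_distr in Hder by lra.
  assert (Hfactor : p * (Re z2 - Re z1) * Rpower W (p - 2)
                    * (Rpower a (p - 1) - Rpower (1 - a) (p - 1)) = 0).
  { rewrite <- Hder. replace (p - 1) with (p - 2 + 1) by ring.
    rewrite !Rpower_plus_1 by lra. unfold real_crossing. ring. }
  assert (Hnz : p * (Re z2 - Re z1) * Rpower W (p - 2) <> 0).
  { pose proof (Rpower_pos W (p - 2)).
    repeat apply Rmult_integral_contrapositive_currified; lra. }
  apply Rpower_inj_l with (p - 1); try lra.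
  apply Rmult_integral in Hfactor as [Hzero | Hzero]; lra.
Qed.

End RealCrossing.

Theorem theorem3p21 (z1 z2 : C) (p : R) :
  inH z1 -> inH z2 -> 1 <= p ->
  Rbar_le (Finite (T_p p z1 z2)) (b_H p z1 z2) /\
  T_p p z1 z2 >= Cmod (Cminus z1 z2) / Cmod (Cminus z1 (Cconj z2)) /\
  s_H z1 z2 = Finite (Cmod (Cminus z1 z2) / Cmod (Cminus z1 (Cconj z2))) /\
  (b_H 1 z1 z2 = Finite (T_p 1 z1 z2) /\
   Finite (T_p 1 z1 z2) = s_H z1 z2) /\
  (1 < p ->
   (b_H p z1 z2 = Finite (T_p p z1 z2) <-> (Re z1 = Re z2 \/ Im z1 = Im z2))).
Proof.
  intros Hz1 Hz2 Hp.
  assert (Hb1 : b_H 1 z1 z2 = Finite (T_p 1 z1 z2)).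
  { rewrite T_p_eq_bH_ratio_real_crossing by (auto; lra).
    apply b_H_eq_of_bH_sum_min; [lra |]. now apply bH_sum_1_min_at_real_crossing. }
  assert (Hs : s_H z1 z2 = Finite (Cmod (Cminus z1 z2) / Cmod (Cminus z1 (Cconj z2))))
    by (unfold s_H; rewrite Hb1, T_p_1 by assumption; reflexivity).
  split; [| split; [| split; [| split]]].
  - rewrite T_p_eq_bH_ratio_real_crossing by (auto; lra). apply bH_ratio_le_b_H.
  - now apply Rle_ge, T_p_ge.
  - exact Hs.
  - now rewrite Hs, <- Hb1.
  - intros Hp1. rewrite T_p_eq_bH_ratio_real_crossing by (auto; lra). split.
    + intros Hb.
      destruct (Req_dec (Re z1) (Re z2)) as [Hre | Hre]; [now left |].
      destruct (Req_dec (Im z1) (Im z2)) as [Him | Him]; [now right |].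
      exfalso. apply (bH_sum_not_min_at_real_crossing z1 z2 Hz1 Hz2 p Hp1 Hre Him).
      apply bH_sum_min_of_b_H_eq; [lra | | exact Hb].
      pose proof (re_le_Cmod (Cminus z1 z2)) as Hre_le.
      change (Rabs (Re z1 - Re z2) <= Cmod (Cminus z1 z2)) in Hre_le.
      pose proof (Rabs_pos_lt _ (Rminus_eq_contra _ _ Hre)). lra.
    + intros [Hre | Him]; apply b_H_eq_of_bH_sum_min; try lra; intros t.
      * now apply bH_sum_min_at_real_crossing_of_Re_eq; try lra.
      * now apply bH_sum_min_at_real_crossing_of_Im_eq.
Qed.
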